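(* Let $n\ge2$ and let $S_i$ ($1\le i\le n-1$) be the simple non-projective $\Gamma_n^2$-module at vertex $i$. Then the $\tau$-perpendicular category $J(S_i)$ of $S_i$ in $\mathrm{mod}\,\Gamma_n^2$ is equivalent to $\mathrm{mod}\,\Gamma_{i-1}^2\oplus\mathrm{mod}\,\Gamma_{n-i-1}^2\oplus\mathrm{mod}\,\Gamma_1^2$.
   Context: $\mathbb{F}$ is an algebraically closed field, $\mathrm{mod}\,A$ the category of finitely generated left modules over a finite dimensional algebra $A$, $\tau$ the Auslander–Reiten translation. For $\tau$-rigid $M$ (i.e. $\mathrm{Hom}(M,\tau M)=0$), $J(M)=\{X:\mathrm{Hom}(M,X)=0,\ \mathrm{Hom}(X,\tau M)=0\}$. $A_n$ is the quiver $1\to2\to\cdots\to n$, $R$ its arrow ideal, $\Gamma_n^2=\mathbb{F}A_n/R^2$ (so $\Gamma_1^2=\mathbb{F}$); $\Gamma_0^2$ is the zero algebra, with $\mathrm{mod}\,\Gamma_0^2=0$. Here the simple $S_i$ for $i\le n-1$ is non-projective, with $\tau S_i=S_{i+1}$. $\oplus$ of module categories denotes the product category, equivalent to the module category of the product algebra. *)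

From HB Require Import structures.
From mathcomp Require Import all_boot all_algebra.
Set Implicit Arguments. Unset Strict Implicit. Unset Printing Implicit Defensive.
Import GRing.Theory.
Local Open Scope ring_scope.

Record cat := Cat {
  ob : Type;
  hom : ob -> ob -> Type;
  heq : forall a b, hom a b -> hom a b -> Prop;
  idm : forall a, hom a a;
  comp : forall x y z, hom y z -> hom x y -> hom x z }.
Arguments heq {c a b}.
Arguments idm {c}.
Arguments comp {c x y z}.

Record functor (C D : cat) := Functor {
  fob : ob C -> ob D;
  fhom : forall a b, hom a b -> hom (fob a) (fob b);
  fresp : forall a b (f g : hom a b), heq f g -> heq (fhom f) (fhom g);
  fid : forall a, heq (fhom (idm a)) (idm (fob a));
  fcomp : forall a b c (f : hom a b) (g : hom b c),
      heq (fhom (comp g f)) (comp (fhom g) (fhom f)) }.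

Definition isomorphic (C : cat) (a b : ob C) : Prop :=
  exists (f : hom a b) (g : hom b a),
    heq (comp g f) (idm a) /\ heq (comp f g) (idm b).

Definition cat_equiv (C D : cat) : Prop :=
  exists Fu : functor C D,
    (forall a b (f g : hom a b), heq (fhom Fu f) (fhom Fu g) -> heq f g) /\
    (forall a b (h : hom (fob Fu a) (fob Fu b)), exists f, heq (fhom Fu f) h) /\
    (forall d : ob D, exists c : ob C, isomorphic (fob Fu c) d).

Definition prodcat (C D : cat) : cat :=
  @Cat (ob C * ob D)
    (fun x y => (hom x.1 y.1 * hom x.2 y.2)%type)
    (fun x y f g => heq f.1 g.1 /\ heq f.2 g.2)
    (fun x => (idm x.1, idm x.2))
    (fun x y z g f => (comp g.1 f.1, comp g.2 f.2)).

(* Vertices 0,...,n-1 (vertex k here is vertex k+1 of the paper); arrow k -> k+1;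
   linear maps are matrices acting on row vectors; relation R^2 = 0. *)
Record rep (F : fieldType) (n : nat) := Rep {
  rdim : nat -> nat;
  rmap : forall k, 'M[F]_(rdim k, rdim k.+1);
  rdim_out : forall k, (n <= k)%N -> rdim k = 0%N;
  rrel : forall k, rmap k *m rmap k.+1 = 0 }.

Record rhom (F : fieldType) (n : nat) (X Y : rep F n) := RHom {
  hmap : forall k, 'M[F]_(rdim X k, rdim Y k);
  hcomm : forall k, rmap X k *m hmap k.+1 = hmap k *m rmap Y k }.

Lemma rhom_id_comm (F : fieldType) n (X : rep F n) k :
  rmap X k *m 1%:M = 1%:M *m rmap X k.
Proof. by rewrite mulmx1 mul1mx. Qed.

Definition rhom_id (F : fieldType) n (X : rep F n) : rhom X X :=
  @RHom F n X X (fun k => 1%:M) (rhom_id_comm X).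

Lemma rhom_comp_comm (F : fieldType) n (X Y Z : rep F n)
  (g : rhom Y Z) (f : rhom X Y) k :
  rmap X k *m (hmap f k.+1 *m hmap g k.+1) = (hmap f k *m hmap g k) *m rmap Z k.
Proof. by rewrite mulmxA hcomm -!mulmxA hcomm. Qed.

Definition rhom_comp (F : fieldType) n (X Y Z : rep F n)
  (g : rhom Y Z) (f : rhom X Y) : rhom X Z :=
  @RHom F n X Z (fun k => hmap f k *m hmap g k) (rhom_comp_comm g f).

Definition rhom_eq (F : fieldType) n (X Y : rep F n) (f g : rhom X Y) : Prop :=
  forall k, hmap f k = hmap g k.

Definition rhom_zero (F : fieldType) n (X Y : rep F n) (f : rhom X Y) : Prop :=
  forall k, hmap f k = 0.

Definition modGamma (F : fieldType) (n : nat) : cat :=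
  @Cat (rep F n) (@rhom F n) (@rhom_eq F n) (@rhom_id F n) (@rhom_comp F n).

Lemma simple_out (n v k : nat) : (n <= k)%N -> nat_of_bool ((k == v) && (k < n)%N) = 0%N.
Proof. by move=> H; rewrite ltnNge H andbF. Qed.

Lemma simple_rel (F : fieldType) (d : nat -> nat) k :
  (0 : 'M[F]_(d k, d k.+1)) *m (0 : 'M[F]_(d k.+1, d k.+2)) = 0.
Proof. by rewrite mul0mx. Qed.

Definition simple_rep (F : fieldType) (n v : nat) : rep F n :=
  @Rep F n (fun k => nat_of_bool ((k == v) && (k < n)%N)) (fun k => 0)
    (@simple_out n v) (@simple_rel F _).

(* Full subcategory J(M) = {X | Hom(M,X) = 0, Hom(X, tau M) = 0}; the AR
   translate tau M is passed explicitly as TM. *)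
Definition Jperp (F : fieldType) n (M TM X : rep F n) : Prop :=
  (forall f : rhom M X, rhom_zero f) /\ (forall f : rhom X TM, rhom_zero f).

Definition Jcat (F : fieldType) n (M TM : rep F n) : cat :=
  @Cat {X : rep F n | Jperp M TM X}
    (fun X Y => rhom (proj1_sig X) (proj1_sig Y))
    (fun X Y => @rhom_eq F n (proj1_sig X) (proj1_sig Y))
    (fun X => rhom_id (proj1_sig X))
    (fun X Y Z => @rhom_comp F n (proj1_sig X) (proj1_sig Y) (proj1_sig Z)).

(* For v + 2 <= n, a Gamma_n^2-module X lies in J(S_v) exactly when the arrow
   map X_v -> X_{v+1} is an isomorphism: Hom(S_v, X) = 0 says it is injective and
   Hom(X, S_{v+1}) = 0 says it is surjective.  Since R^2 = 0, this isomorphism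
   forces the arrows into X_v and out of X_{v+1} to vanish, so X is the direct
   sum of its restriction to the vertices before v, its restriction to the
   vertices after v+1, and the projective-injective piece X_v = X_{v+1}.  Sending
   X to these three pieces is faithful and full, because a morphism at vertex v+1
   is determined by its component at v, and essentially surjective, because the
   three pieces can be glued back together. *)

From Pilot Require Import Defs.
From mathcomp Require Import all_boot all_algebra zify.
Set Implicit Arguments. Unset Strict Implicit. Unset Printing Implicit Defensive.
Import GRing.Theory.
Local Open Scope ring_scope.

Section MatrixEntries.
Variable R : pzSemiRingType.

(* Comparing entry functions
   ([mx_sim]) relates matrices whose sizes agree only propositionally, as the
   sizes of windows and gluings of representations do. *)
Definition mx_entry m n (A : 'M[R]_(m, n)) (i j : nat) : R :=
  if insub i is Some i' then if insub j is Some j' then A i' j' else 0 else 0.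

Definition mx_sim m n m' n' (A : 'M[R]_(m, n)) (B : 'M[R]_(m', n')) :=
  forall i j, mx_entry A i j = mx_entry B i j.

Definition mx_resize {m n m' n'} (A : 'M[R]_(m, n)) : 'M[R]_(m', n') :=
  \matrix_(i, j) mx_entry A i j.

Lemma mx_entryE m n (A : 'M[R]_(m, n)) (i : 'I_m) (j : 'I_n) : mx_entry A i j = A i j.
Proof. by rewrite /mx_entry !valK. Qed.

Lemma mx_entry_out m n (A : 'M[R]_(m, n)) i j :
  ~~ ((i < m) && (j < n))%N -> mx_entry A i j = 0.
Proof.
by rewrite /mx_entry; case: insubP => [i' -> _|//]; case: insubP => [j' -> _|].
Qed.

Lemma mx_sim_eq m n (A B : 'M[R]_(m, n)) : mx_sim A B -> A = B.
Proof. by move=> AB; apply/matrixP => i j; rewrite -!mx_entryE AB. Qed.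

Lemma mx_sim_refl m n (A : 'M[R]_(m, n)) : mx_sim A A.
Proof. by []. Qed.

Lemma mx_sim_sym m n m' n' (A : 'M[R]_(m, n)) (B : 'M[R]_(m', n')) :
  mx_sim A B -> mx_sim B A.
Proof. by move=> AB i j; rewrite AB. Qed.

Lemma mx_sim_trans m n m' n' m'' n'' (A : 'M[R]_(m, n)) (B : 'M[R]_(m', n'))
    (C : 'M[R]_(m'', n'')) :
  mx_sim A B -> mx_sim B C -> mx_sim A C.
Proof. by move=> AB BC i j; rewrite AB BC. Qed.

Lemma mx_entry0 m n i j : mx_entry (0 : 'M[R]_(m, n)) i j = 0.
Proof.
case: (boolP ((i < m) && (j < n))%N) => [/andP[im jn]|]; last exact: mx_entry_out.
by rewrite -[i]/(val (Ordinal im)) -[j]/(val (Ordinal jn)) mx_entryE mxE.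
Qed.

Lemma mx_sim0 m n m' n' : mx_sim (0 : 'M[R]_(m, n)) (0 : 'M[R]_(m', n')).
Proof. by move=> i j; rewrite !mx_entry0. Qed.

Lemma mx_dim0_eq m n (A B : 'M[R]_(m, n)) : (m == 0%N) || (n == 0%N) -> A = B.
Proof. by move=> /orP[]/eqP mn0; apply/matrixP => -[i ?] [j ?]; exfalso; lia. Qed.

Lemma mx_sim_dim0 m n m' n' (A : 'M[R]_(m, n)) :
  (m == 0%N) || (n == 0%N) -> mx_sim A (0 : 'M[R]_(m', n')).
Proof. by move=> dim0; rewrite (mx_dim0_eq A 0 dim0); apply: mx_sim0. Qed.

Lemma mx_sim1 m m' : m = m' -> mx_sim (1%:M : 'M[R]_m) (1%:M : 'M[R]_m').
Proof. by move->. Qed.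

Lemma mx_entry_resize m n m' n' (A : 'M[R]_(m, n)) i j :
  mx_entry (mx_resize A : 'M_(m', n')) i j
  = if ((i < m') && (j < n'))%N then mx_entry A i j else 0.
Proof.
case: ifP => [/andP[im jn]|/negbT out]; last exact: mx_entry_out.
by rewrite -[i]/(val (Ordinal im)) -[j]/(val (Ordinal jn)) mx_entryE mxE.
Qed.

Lemma mx_sim_resize m n m' n' (A : 'M[R]_(m, n)) :
  (m <= m')%N -> (n <= n')%N -> mx_sim (mx_resize A : 'M_(m', n')) A.
Proof.
move=> mm nn i j; rewrite mx_entry_resize; case: ifP => // /negbT out.
by rewrite mx_entry_out //; apply: contra out => /andP[? ?]; apply/andP; lia.
Qed.

Lemma mx_resize0 m n m' n' : mx_resize (0 : 'M[R]_(m, n)) = 0 :> 'M_(m', n').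
Proof. by apply/mx_sim_eq => i j; rewrite mx_entry_resize !mx_entry0 if_same. Qed.

Lemma mx_resize_inj m n m' n' (A B : 'M[R]_(m, n)) : (m <= m')%N -> (n <= n')%N ->
  mx_resize A = mx_resize B :> 'M_(m', n') -> A = B.
Proof.
move=> mm nn AB; apply: mx_sim_eq.
apply: mx_sim_trans (mx_sim_sym (mx_sim_resize A mm nn)) _.
by rewrite AB; apply: mx_sim_resize.
Qed.

Lemma mx_entry_mul m n p (A : 'M[R]_(m, n)) (B : 'M[R]_(n, p)) N i j :
  (n <= N)%N ->
  mx_entry (A *m B) i j = \sum_(c < N) mx_entry A i c * mx_entry B c j.
Proof.
move=> nN; case: (boolP ((i < m) && (j < p))%N) => [/andP[im jp]|out].
  have -> : mx_entry (A *m B) i j = \sum_(c < n) mx_entry A i c * mx_entry B c j.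
    rewrite -[i]/(val (Ordinal im)) -[j]/(val (Ordinal jp)) mx_entryE mxE.
    by apply: eq_bigr => c _; rewrite !mx_entryE.
  rewrite (big_ord_widen N (fun c => mx_entry A i c * mx_entry B c j) nN).
  rewrite big_mkcond /=; apply: eq_bigr => c _; case: ifP => // cn.
  by rewrite mx_entry_out ?mul0r // cn andbF.
rewrite mx_entry_out // big1 // => c _.
move: out; rewrite negb_and => /orP[] out.
  by rewrite mx_entry_out ?mul0r // negb_and out.
by rewrite (mx_entry_out B) ?mulr0 // negb_and out orbT.
Qed.

Lemma mx_sim_mul m n p m' n' p' (A : 'M[R]_(m, n)) (B : 'M[R]_(n, p))
    (A' : 'M[R]_(m', n')) (B' : 'M[R]_(n', p')) :
  mx_sim A A' -> mx_sim B B' -> mx_sim (A *m B) (A' *m B').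
Proof.
move=> AA BB i j; rewrite (@mx_entry_mul _ _ _ _ _ (maxn n n')) ?leq_maxl //.
rewrite (@mx_entry_mul _ _ _ _ _ (maxn n n')) ?leq_maxr //.
by apply: eq_bigr => c _; rewrite AA BB.
Qed.

End MatrixEntries.

Arguments mx_sim1 {R m m'}.
Arguments mx_sim0 {R m n m' n'}.
Arguments mx_resize0 {R m n m' n'}.

Lemma row_free_full_sim1 (F : fieldType) m1 m2 c (M : 'M[F]_(m1, m2)) :
  m1 = c -> m2 = c -> mx_sim M (1%:M : 'M_c) -> row_free M /\ row_full M.
Proof.
move=> m1c m2c; subst m1 m2 => /mx_sim_eq ->.
by rewrite row_free_unit row_full_unit unitmx1.
Qed.


Definition functor_pair (C D1 D2 : Defs.cat) (G1 : functor C D1) (G2 : functor C D2) :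
  functor C (prodcat D1 D2) :=
  @Functor C (prodcat D1 D2) (fun a => (fob G1 a, fob G2 a))
    (fun a b f => (fhom G1 f, fhom G2 f))
    (fun a b f g fg => conj (fresp G1 fg) (fresp G2 fg))
    (fun a => conj (fid G1 a) (fid G2 a))
    (fun a b c f g => conj (fcomp G1 f g) (fcomp G2 f g)).

Definition functor_restrict (F : fieldType) n (M TM : rep F n) (D : Defs.cat)
    (G : functor (modGamma F n) D) : functor (Jcat M TM) D :=
  @Functor (Jcat M TM) D (fun X => fob G (proj1_sig X))
    (fun X Y f => fhom G f)
    (fun X Y f g fg => fresp G fg)
    (fun X => fid G (proj1_sig X))
    (fun X Y Z f g => fcomp G f g).

Lemma isomorphic_pair (C D : Defs.cat) (a b : ob C) (c d : ob D) :
  isomorphic a b -> isomorphic c d -> @isomorphic (prodcat C D) (a, c) (b, d).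
Proof.
by move=> [f [g [gf fg]]] [f' [g' [gf' fg']]]; exists (f, f'), (g, g').
Qed.

Section Representations.
Variables (F : fieldType) (n : nat).
Implicit Types P Q X Y : rep F n.

Definition same_rep P Q :=
  rdim P =1 rdim Q /\ forall k, mx_sim (rmap P k) (rmap Q k).

Lemma same_rep_trans P Q X : same_rep P Q -> same_rep Q X -> same_rep P X.
Proof.
move=> [dPQ mPQ] [dQX mQX]; split=> k; first by rewrite dPQ.
exact: mx_sim_trans (mPQ k) (mQX k).
Qed.

Lemma same_rep_sym P Q : same_rep P Q -> same_rep Q P.
Proof. by move=> [dPQ mPQ]; split=> k; [rewrite dPQ | apply: mx_sim_sym]. Qed.

Lemma same_rep_hom P Q : same_rep P Q ->
  exists f : rhom P Q, forall k, mx_sim (hmap f k) (1%:M : 'M_(rdim P k)).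
Proof.
move=> [dPQ mPQ].
pose e k : 'M[F]_(rdim P k, rdim Q k) := mx_resize (1%:M : 'M_(rdim Q k)).
have eQ k : mx_sim (e k) (1%:M : 'M_(rdim Q k)) by apply: mx_sim_resize; rewrite ?dPQ.
have eP k : mx_sim (e k) (1%:M : 'M_(rdim P k)).
  exact: mx_sim_trans (eQ k) (mx_sim1 (esym (dPQ k))).
have e_comm k : rmap P k *m e k.+1 = e k *m rmap Q k.
  apply: mx_sim_eq; apply: mx_sim_trans (mx_sim_mul (mx_sim_refl _) (eP k.+1)) _.
  rewrite mulmx1; apply: mx_sim_trans (mPQ k) _.
  rewrite -{1}[rmap Q k]mul1mx; exact: mx_sim_mul (mx_sim_sym (eQ k)) (mx_sim_refl _).
by exists (RHom e_comm).
Qed.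

Lemma same_rep_iso P Q : same_rep P Q -> @isomorphic (modGamma F n) P Q.
Proof.
move=> PQ; have [f f1] := same_rep_hom PQ.
have [g g1] := same_rep_hom (same_rep_sym PQ).
have [dPQ _] := PQ.
exists f, g; split=> k /=; apply: mx_sim_eq; rewrite -[X in mx_sim _ X]mulmx1.
  exact: mx_sim_mul (f1 k) (mx_sim_trans (g1 k) (mx_sim1 (esym (dPQ k)))).
exact: mx_sim_mul (g1 k) (mx_sim_trans (f1 k) (mx_sim1 (dPQ k))).
Qed.

End Representations.

Section RadicalSquareZero.
Variables (F : fieldType) (n : nat) (X : rep F n).

Lemma rmap_prev_eq0 k : row_free (rmap X k.+1) -> rmap X k = 0.
Proof. by move=> free; apply/eqP; rewrite -(mulmx_free_eq0 _ free) rrel. Qed.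

Lemma rmap_next_eq0 k : row_full (rmap X k) -> rmap X k.+1 = 0.
Proof. by move=> full; apply: (row_full_inj full); rewrite rrel mulmx0. Qed.

End RadicalSquareZero.

Section SimplePerp.
Variables (F : fieldType) (n v : nat) (X : rep F n).

Lemma homs_from_simple_eq0 : (v < n)%N ->
  (forall f : rhom (simple_rep F n v) X, rhom_zero f) <-> row_free (rmap X v).
Proof.
move=> vn; split=> [homs0 | free f k].
  apply: inj_row_free => x xX0.
  pose h k : 'M[F]_(rdim (simple_rep F n v) k, rdim X k) :=
    mx_resize (if k == v then x else 0).
  have h_comm k : rmap (simple_rep F n v) k *m h k.+1 = h k *m rmap X k.
    rewrite [rmap _ k]/= mul0mx /h.
    case: (eqVneq k v) => [->|_]; last by rewrite mx_resize0 mul0mx.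
    apply/esym/mx_sim_eq.
    apply: mx_sim_trans (mx_sim_mul (mx_sim_resize _ _ (leqnn _)) (mx_sim_refl _)) _.
    - by rewrite /= eqxx vn.
    - by rewrite xX0; apply: mx_sim0.
  have : h v = 0 := homs0 (RHom h_comm) v.
  rewrite /h eqxx => hv0.
  by apply: (mx_resize_inj _ _ (etrans hv0 (esym mx_resize0))); rewrite //= eqxx vn.
case: (eqVneq k v) => [->|kv]; last first.
  by apply: mx_dim0_eq; rewrite /= (negbTE kv).
have := hcomm f v; rewrite [rmap _ v]/= mul0mx => /esym/eqP.
by rewrite mulmx_free_eq0 // => /eqP.
Qed.

Lemma homs_to_simple_eq0 : (v.+1 < n)%N ->
  (forall g : rhom X (simple_rep F n v.+1), rhom_zero g) <-> row_full (rmap X v).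
Proof.
move=> vn; split=> [homs0 | full g k].
  have -> : row_full (rmap X v) = row_free (rmap X v)^T.
    by rewrite /row_free /row_full mxrank_tr.
  apply: inj_row_free => y yX0.
  pose h k : 'M[F]_(rdim X k, rdim (simple_rep F n v.+1) k) :=
    mx_resize (if k == v.+1 then y^T else 0).
  have h_comm k : rmap X k *m h k.+1 = h k *m rmap (simple_rep F n v.+1) k.
    rewrite [rmap (simple_rep _ _ _) k]/= mulmx0 /h eqSS.
    case: (eqVneq k v) => [->|_]; last by rewrite mx_resize0 mulmx0.
    apply/mx_sim_eq.
    apply: mx_sim_trans (mx_sim_mul (mx_sim_refl _) (mx_sim_resize _ (leqnn _) _)) _.
    - by rewrite /= eqxx vn.
    - by rewrite -[rmap X v]trmxK -trmx_mul yX0 trmx0; apply: mx_sim0.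
  have : h v.+1 = 0 := homs0 (RHom h_comm) v.+1.
  rewrite /h eqxx => hv0; apply: trmx_inj; rewrite trmx0.
  by apply: (mx_resize_inj _ _ (etrans hv0 (esym mx_resize0))); rewrite //= eqxx vn.
case: (eqVneq k v.+1) => [->|kv]; last first.
  by apply: mx_dim0_eq; rewrite /= (negbTE kv) orbT.
apply: (row_full_inj full); rewrite hcomm [rmap (simple_rep _ _ _) v]/=.
by rewrite !mulmx0.
Qed.

Lemma Jperp_simpleE : (v.+1 < n)%N ->
  Jperp (simple_rep F n v) (simple_rep F n v.+1) X <->
  row_free (rmap X v) /\ row_full (rmap X v).
Proof.
move=> vn; rewrite /Jperp homs_from_simple_eq0 ?homs_to_simple_eq0 //.
exact: ltnW.
Qed.

End SimplePerp.

Section Window.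
Variables (F : fieldType) (n s m : nat).
Implicit Types X Y Z : rep F n.

Definition window_dim X k := if (k < m)%N then rdim X (k + s) else 0%N.

Lemma window_dim_out X k : (m <= k)%N -> window_dim X k = 0%N.
Proof. by rewrite /window_dim ltnNge => ->. Qed.

Definition window_map X k : 'M[F]_(window_dim X k, window_dim X k.+1) :=
  mx_resize (rmap X (k + s)).

Lemma window_map_sim X k : (k.+1 < m)%N -> mx_sim (window_map X k) (rmap X (k + s)).
Proof. by move=> km; apply: mx_sim_resize; rewrite /window_dim ?km ?(ltnW km). Qed.

Lemma window_map_end X k : (m <= k.+1)%N -> window_map X k = 0.
Proof. by move=> km; apply: mx_dim0_eq; rewrite (window_dim_out X km) orbT. Qed.

Lemma window_rel X k : window_map X k *m window_map X k.+1 = 0.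
Proof.
case: (ltnP k.+2 m) => km; last by rewrite (window_map_end X km) mulmx0.
apply: mx_sim_eq; apply: mx_sim_trans (mx_sim_mul (window_map_sim _ (ltnW km))
  (window_map_sim _ km)) _.
by rewrite rrel; apply: mx_sim0.
Qed.

Definition window_rep X : rep F m := Rep (@window_dim_out X) (@window_rel X).

Definition window_hmap X Y (f : rhom X Y) k : 'M[F]_(window_dim X k, window_dim Y k) :=
  mx_resize (hmap f (k + s)).

Lemma window_hmap_sim X Y (f : rhom X Y) k :
  (k < m)%N -> mx_sim (window_hmap f k) (hmap f (k + s)).
Proof. by move=> km; apply: mx_sim_resize; rewrite /window_dim km. Qed.

Lemma window_hcomm X Y (f : rhom X Y) k :
  window_map X k *m window_hmap f k.+1 = window_hmap f k *m window_map Y k.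
Proof.
case: (ltnP k.+1 m) => km; last first.
  by apply: mx_dim0_eq; rewrite (window_dim_out Y km) orbT.
apply: mx_sim_eq.
apply: mx_sim_trans (mx_sim_mul (window_map_sim _ km) (window_hmap_sim _ km)) _.
rewrite hcomm; apply: mx_sim_sym.
exact: mx_sim_mul (window_hmap_sim _ (ltnW km)) (window_map_sim _ km).
Qed.

Definition window_hom X Y (f : rhom X Y) : rhom (window_rep X) (window_rep Y) :=
  @RHom F m (window_rep X) (window_rep Y) (window_hmap f) (window_hcomm f).

Lemma window_hmap_eq X Y (f g : rhom X Y) k : (k < m)%N ->
  window_hmap f k = window_hmap g k -> hmap f (k + s) = hmap g (k + s).
Proof. by move=> km; apply: mx_resize_inj; rewrite /window_dim km. Qed.

Lemma window_hom_resp X Y (f g : rhom X Y) :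
  rhom_eq f g -> rhom_eq (window_hom f) (window_hom g).
Proof. by move=> fg k; rewrite /= /window_hmap fg. Qed.

Lemma window_hom_id X : rhom_eq (window_hom (rhom_id X)) (rhom_id (window_rep X)).
Proof.
move=> k; case: (ltnP k m) => km; last by apply: mx_dim0_eq; rewrite /= window_dim_out.
apply: mx_sim_eq; apply: mx_sim_trans (window_hmap_sim _ km) _.
by apply: mx_sim1; rewrite /= /window_dim km.
Qed.

Lemma window_hom_comp X Y Z (f : rhom X Y) (g : rhom Y Z) :
  rhom_eq (window_hom (rhom_comp g f)) (rhom_comp (window_hom g) (window_hom f)).
Proof.
move=> k; case: (ltnP k m) => km; last by apply: mx_dim0_eq; rewrite /= window_dim_out.
apply: mx_sim_eq; apply: mx_sim_trans (window_hmap_sim _ km) _; apply: mx_sim_sym.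
exact: mx_sim_mul (window_hmap_sim _ km) (window_hmap_sim _ km).
Qed.

Definition window_functor : functor (modGamma F n) (modGamma F m) :=
  @Functor (modGamma F n) (modGamma F m) window_rep window_hom
    window_hom_resp window_hom_id (fun X Y Z f g => window_hom_comp f g).

Lemma window_lift_comm X Y (h : rhom (window_rep X) (window_rep Y))
    (phi : forall j, 'M[F]_(rdim X j, rdim Y j)) k :
  (forall k, (k < m)%N -> mx_sim (phi (k + s)%N) (hmap h k)) -> (k.+1 < m)%N ->
  rmap X (k + s) *m phi (k + s)%N.+1 = phi (k + s)%N *m rmap Y (k + s).
Proof.
move=> phih km; apply: mx_sim_eq.
apply: mx_sim_trans (mx_sim_mul (mx_sim_sym (window_map_sim _ km)) (phih _ km)) _.
rewrite (hcomm h k).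
exact: mx_sim_mul (mx_sim_sym (phih _ (ltnW km))) (window_map_sim _ km).
Qed.

Lemma window_hom_lift X Y (h : rhom (window_rep X) (window_rep Y)) (f : rhom X Y) :
  (forall k, (k < m)%N -> mx_sim (hmap f (k + s)) (hmap h k)) ->
  rhom_eq (window_hom f) h.
Proof.
move=> fh k; case: (ltnP k m) => km; last by apply: mx_dim0_eq; rewrite /= window_dim_out.
by apply: mx_sim_eq; apply: mx_sim_trans (window_hmap_sim _ km) (fh k km).
Qed.

End Window.

Lemma same_window (F : fieldType) n1 n2 s1 s2 m (P : rep F n1) (Q : rep F n2) :
  (forall k, (k < m)%N -> rdim P (k + s1) = rdim Q (k + s2)) ->
  (forall k, (k.+1 < m)%N -> mx_sim (rmap P (k + s1)) (rmap Q (k + s2))) ->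
  same_rep (window_rep s1 m P) (window_rep s2 m Q).
Proof.
move=> dPQ mPQ; split=> k; first by rewrite /= /window_dim; case: ifP => // /dPQ.
case: (ltnP k.+1 m) => km; last by rewrite /= !window_map_end //; apply: mx_sim0.
apply: mx_sim_trans (window_map_sim s1 P km) _.
exact: mx_sim_trans (mPQ k km) (mx_sim_sym (window_map_sim s2 Q km)).
Qed.

Section Glue.
Variables (F : fieldType) (a b : nat) (X : rep F a) (Y : rep F b).

Definition glue_dim k := if (k < a)%N then rdim X k else rdim Y (k - a).

Definition glue_map k : 'M[F]_(glue_dim k, glue_dim k.+1) :=
  if (k < a)%N then mx_resize (rmap X k) else mx_resize (rmap Y (k - a)).

Lemma glue_dim_out k : (a + b <= k)%N -> glue_dim k = 0%N.
Proof.
move=> abk; rewrite /glue_dim ifF; last by apply/negbTE; rewrite -leqNgt; lia.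
by apply: rdim_out; lia.
Qed.

Lemma glue_map_siml k : (k < a)%N -> mx_sim (glue_map k) (rmap X k).
Proof.
move=> ka; rewrite /glue_map ka; apply: mx_sim_resize; rewrite /glue_dim ?ka //.
by case: ifP => // /negbT; rewrite -leqNgt => /(rdim_out X) ->.
Qed.

Lemma glue_map_simr k : (a <= k)%N -> mx_sim (glue_map k) (rmap Y (k - a)).
Proof.
move=> ak; rewrite /glue_map ltnNge ak; apply: mx_sim_resize.
  by rewrite /glue_dim ltnNge ak.
by rewrite /glue_dim ltnNge (leqW ak) subSn.
Qed.

Lemma glue_rel k : glue_map k *m glue_map k.+1 = 0.
Proof.
apply: mx_sim_eq; case: (ltnP k.+1 a) => ka.
  apply: mx_sim_trans (mx_sim_mul (glue_map_siml (ltnW ka)) (glue_map_siml ka)) _.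
  by rewrite rrel; apply: mx_sim0.
case: (ltnP k a) => [ka' | ak].
  have Xk0 : mx_sim (rmap X k) (0 : 'M[F]_(glue_dim k, glue_dim k.+1)).
    by apply: mx_sim_dim0; rewrite (rdim_out X ka) orbT.
  rewrite (mx_sim_eq (mx_sim_trans (glue_map_siml ka') Xk0)) mul0mx.
  exact: mx_sim0.
have := glue_map_simr (leqW ak); rewrite subSn // => simk1.
apply: mx_sim_trans (mx_sim_mul (glue_map_simr ak) simk1) _.
by rewrite rrel; apply: mx_sim0.
Qed.

Definition glue_rep : rep F (a + b) := Rep glue_dim_out glue_rel.

Lemma rdim_glue_l k : (k < a)%N -> rdim glue_rep k = rdim X k.
Proof. by move=> ka; rewrite /= /glue_dim ka. Qed.

Lemma rdim_glue_r k : (a <= k)%N -> rdim glue_rep k = rdim Y (k - a).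
Proof. by move=> ak; rewrite /= /glue_dim ltnNge ak. Qed.

Lemma window_glue_l s m : (s + m <= a)%N ->
  same_rep (window_rep s m glue_rep) (window_rep s m X).
Proof.
move=> sma; apply: same_window => k km; first by rewrite rdim_glue_l //; lia.
by apply: glue_map_siml; lia.
Qed.

Lemma window_glue_r s m : same_rep (window_rep (s + a) m glue_rep) (window_rep s m Y).
Proof.
have shift k : (k + (s + a) - a = k + s)%N by rewrite addnA addnK.
apply: same_window => k km; first by rewrite rdim_glue_r ?shift //; lia.
by have := @glue_map_simr (k + (s + a)); rewrite shift; apply; lia.
Qed.

End Glue.

Lemma window_full (F : fieldType) a (X : rep F a) : same_rep (window_rep 0 a X) X.
Proof.
split=> k; first by rewrite /= /window_dim addn0; case: ltnP => // /(rdim_out X).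
case: (ltnP k.+1 a) => ka; first by have := window_map_sim 0 X ka; rewrite addn0.
rewrite /= window_map_end //; apply: mx_sim_sym; apply: mx_sim_dim0.
by rewrite (rdim_out X ka) orbT.
Qed.

Section ProjInj.
Variables (F : fieldType) (c : nat).

Definition proj_inj_dim k := if (k < 2)%N then c else 0%N.

Definition proj_inj_map k : 'M[F]_(proj_inj_dim k, proj_inj_dim k.+1) :=
  mx_resize (if k == 0%N then 1%:M : 'M_c else 0).

Lemma proj_inj_dim_out k : (2 <= k)%N -> proj_inj_dim k = 0%N.
Proof. by move=> k2; rewrite /proj_inj_dim ltnNge k2. Qed.

Lemma proj_inj_rel k : proj_inj_map k *m proj_inj_map k.+1 = 0.
Proof. by case: k => [|k]; rewrite /proj_inj_map /= mx_resize0 ?mulmx0 ?mul0mx. Qed.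

Definition proj_inj_rep : rep F 2 := Rep proj_inj_dim_out proj_inj_rel.

Lemma proj_inj_map0 : mx_sim (rmap proj_inj_rep 0) (1%:M : 'M[F]_c).
Proof. exact: mx_sim_resize. Qed.

End ProjInj.

Lemma window_proj_inj (F : fieldType) (C : rep F 1) :
  same_rep (window_rep 0 1 (proj_inj_rep F (rdim C 0))) C.
Proof.
split=> [[|k] //|k]; first by rewrite [RHS]rdim_out.
rewrite /= window_map_end //; apply: mx_sim_sym; apply: mx_sim_dim0.
by rewrite (rdim_out C (ltn0Sn k)) orbT.
Qed.

Section PerpCategory.
Variables (F : fieldType) (v w : nat).
Local Notation n := (v + 2 + w)%N.
Local Notation S := (simple_rep F n v).
Local Notation T := (simple_rep F n v.+1).
Local Notation target :=
  (prodcat (prodcat (modGamma F v) (modGamma F w)) (modGamma F 1)).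

Lemma vS_lt_n : (v.+1 < n)%N. Proof. lia. Qed.

Definition perp_functor : functor (Jcat S T) target :=
  functor_restrict S T (functor_pair
    (functor_pair (window_functor F n 0 v) (window_functor F n (v + 2) w))
    (window_functor F n v 1)).

Lemma perp_faithful (X Y : ob (Jcat S T)) (f g : Defs.hom X Y) :
  heq (fhom perp_functor f) (fhom perp_functor g) -> heq f g.
Proof.
move: X Y f g => [X JX] [Y JY] f g [[fgL fgR] fgM] j /=.
have [_ fullX] := (Jperp_simpleE X vS_lt_n).1 JX.
have [jv | [-> | [-> | vj]]] : (j < v \/ j = v \/ j = v.+1 \/ v + 2 <= j)%N by lia.
- by have := window_hmap_eq jv (fgL j); rewrite addn0.
- by have := window_hmap_eq (s := v) (ltn0Sn 0) (fgM 0).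
- apply: (row_full_inj fullX); rewrite !hcomm; congr (_ *m _).
  by have := window_hmap_eq (s := v) (ltn0Sn 0) (fgM 0).
case: (ltnP j n) => jn; last by apply: mx_dim0_eq; rewrite rdim_out.
have := window_hmap_eq (s := v + 2) (k := j - (v + 2)) _ (fgR _).
by rewrite subnK //; apply; lia.
Qed.

Section Lift.
Variables (X Y : rep F n) (hL : rhom (window_rep 0 v X) (window_rep 0 v Y))
  (hR : rhom (window_rep (v + 2) w X) (window_rep (v + 2) w Y))
  (hM : rhom (window_rep v 1 X) (window_rep v 1 Y))
  (B : 'M[F]_(rdim X v.+1, rdim X v)).

(* [B] is a right inverse of the isomorphism [rmap X v], so the component at
   [v.+1] is the one forced by the component at [v]. *)
Definition perp_lift j : 'M[F]_(rdim X j, rdim Y j) :=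
  if (j < v)%N then mx_resize (hmap hL j)
  else if j == v then mx_resize (hmap hM 0)
  else if j == v.+1 then mx_resize (B *m hmap hM 0 *m rmap Y v)
  else mx_resize (hmap hR (j - (v + 2))).

Lemma perp_lift_simL k : (k < v)%N -> mx_sim (perp_lift (k + 0)%N) (hmap hL k).
Proof.
move=> kv; rewrite addn0 /perp_lift kv.
by apply: mx_sim_resize; rewrite /= /window_dim kv addn0.
Qed.

Lemma perp_lift_simM k : (k < 1)%N -> mx_sim (perp_lift (k + v)%N) (hmap hM k).
Proof.
by case: k => // _; rewrite /perp_lift ltnn eqxx; apply: mx_sim_resize.
Qed.

Lemma perp_lift_simR k : (k < w)%N -> mx_sim (perp_lift (k + (v + 2))%N) (hmap hR k).
Proof.
move=> kw; rewrite /perp_lift ifF ?ifF ?addnK; try lia.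
by apply: mx_sim_resize; rewrite /= /window_dim kw.
Qed.

Hypotheses (freeX : row_free (rmap X v)) (freeY : row_free (rmap Y v))
  (fullX : row_full (rmap X v)) (fullY : row_full (rmap Y v))
  (XB : rmap X v *m B = 1%:M).

Lemma perp_lift_comm j : rmap X j *m perp_lift j.+1 = perp_lift j *m rmap Y j.
Proof.
have [jv | [jv | [-> | [-> | vj]]]] :
    (j.+1 < v \/ j.+1 = v \/ j = v \/ j = v.+1 \/ v + 2 <= j)%N by lia.
- by have := window_lift_comm perp_lift_simL jv; rewrite addn0.
- have X0 : rmap X j = 0 by apply: rmap_prev_eq0; rewrite jv.
  have Y0 : rmap Y j = 0 by apply: rmap_prev_eq0; rewrite jv.
  by rewrite X0 Y0 mul0mx mulmx0.
- have lift_succ : mx_sim (perp_lift v.+1) (B *m hmap hM 0 *m rmap Y v).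
    rewrite /perp_lift ltnNge leqnSn eqSS eqxx (gtn_eqF (ltnSn v)).
    exact: mx_sim_resize.
  apply: mx_sim_eq; apply: mx_sim_trans (mx_sim_mul (mx_sim_refl _) lift_succ) _.
  rewrite !mulmxA XB mul1mx.
  exact: mx_sim_mul (mx_sim_sym (perp_lift_simM (ltn0Sn 0))) (mx_sim_refl _).
- by rewrite (rmap_next_eq0 fullX) (rmap_next_eq0 fullY) mul0mx mulmx0.
case: (ltnP j.+1 n) => jn; last first.
  by apply: mx_dim0_eq; rewrite (rdim_out Y jn) orbT.
have := window_lift_comm (k := j - (v + 2)) perp_lift_simR.
by rewrite subnK //; apply; lia.
Qed.

End Lift.

Lemma perp_full (X Y : ob (Jcat S T))
    (h : Defs.hom (fob perp_functor X) (fob perp_functor Y)) :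
  exists f, heq (fhom perp_functor f) h.
Proof.
move: X Y h => [X JX] [Y JY] [[hL hR] hM] /=.
have [freeX fullX] := (Jperp_simpleE X vS_lt_n).1 JX.
have [freeY fullY] := (Jperp_simpleE Y vS_lt_n).1 JY.
have [B XB] := row_freeP freeX.
exists (RHom (perp_lift_comm hL hR hM freeX freeY fullX fullY XB)).
split; [split|]; apply: window_hom_lift.
- exact: perp_lift_simL.
- exact: perp_lift_simR.
- exact: perp_lift_simM.
Qed.

Definition perp_glue (A : rep F v) (B : rep F w) (C : rep F 1) : rep F n :=
  glue_rep (glue_rep A (proj_inj_rep F (rdim C 0))) B.

Lemma perp_glue_Jperp A B C : Jperp S T (perp_glue A B C).
Proof.
apply/(Jperp_simpleE _ vS_lt_n).
have v_lt : (v < v + 2)%N by rewrite addn2.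
have vS_lt : (v.+1 < v + 2)%N by rewrite addn2.
apply: (@row_free_full_sim1 _ _ _ (rdim C 0)).
- by rewrite rdim_glue_l // rdim_glue_r // subnn; reflexivity.
- by rewrite rdim_glue_l // rdim_glue_r // subSnn; reflexivity.
apply: mx_sim_trans (glue_map_siml _ _ v_lt) _.
apply: mx_sim_trans (glue_map_simr _ _ (leqnn v)) _.
by rewrite subnn; apply: proj_inj_map0.
Qed.

Lemma perp_ess_surj (d : ob target) :
  exists X, isomorphic (fob perp_functor X) d.
Proof.
move: d => [[A B] C]; exists (exist _ (perp_glue A B C) (perp_glue_Jperp A B C)).
apply: isomorphic_pair; first apply: isomorphic_pair; apply: same_rep_iso.
- apply: same_rep_trans (window_glue_l _ _ _) _; first by rewrite leq_addr.
  by apply: same_rep_trans (window_glue_l _ _ _) (window_full A).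
- exact: same_rep_trans (window_glue_r _ _ 0 w) (window_full B).
- apply: same_rep_trans (window_glue_l _ _ _) _; first by rewrite leq_add2l.
  exact: same_rep_trans (window_glue_r _ _ 0 1) (window_proj_inj C).
Qed.

End PerpCategory.

Theorem proposition4p2 (F : closedFieldType) (n i : nat) :
  (2 <= n)%N -> (1 <= i)%N -> (i <= n - 1)%N ->
  cat_equiv (Jcat (simple_rep F n (i - 1)) (simple_rep F n i))
    (prodcat (prodcat (modGamma F (i - 1)) (modGamma F (n - i - 1)))
             (modGamma F 1)).
Proof.
case: i => [//|v] _ _ vn.
have [w ->] : exists w, n = (v + 2 + w)%N by exists (n - v.+2)%N; lia.
have -> : (v + 2 + w - v.+1 - 1 = w)%N by lia.
rewrite subn1 /=.
exists (perp_functor F v w).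
split; [exact: perp_faithful | split; [exact: perp_full | exact: perp_ess_surj]].
Qed.
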